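(* Let $X$ be a proper metric space with $\operatorname{trasind} X=\alpha$ for some ordinal number $\alpha$. Then for each ordinal $\beta<\alpha$ there exists a subset $X_\beta\subset X$ (with the restricted metric) such that $\operatorname{trasind} X_\beta=\beta$.
   Context: A metric space is proper if every closed ball is compact; each such space $X$ has a fixed base point $x_0$, with metric $d$. A map $\phi:X\to[0,1]$ is slowly oscillating if for every $r>0$ and $\varepsilon>0$ there is $D>0$ with $\operatorname{diam}\phi(B_r(x))<\varepsilon$ whenever $d(x,x_0)\ge D$, where $B_r(x)$ is the open $r$-ball. The Higson compactification $cX$ is the closure of the image of $X$ under $x\mapsto(\phi(x))_{\phi\in C_h(X)}\in[0,1]^{C_h(X)}$, where $C_h(X)$ is the set of continuous slowly oscillating maps $X\to[0,1]$; the Higson corona is $\nu X=cX\setminus X$. For $C\subset X$, $C'=\operatorname{cl}_{cX}C\cap\nu X$. A partition between disjoint closed sets $P,Q$ of a space $Z$ is a set $S\subset Z$ such that $Z\setminus S=U_1\cup U_2$ with $U_1,U_2$ disjoint open, $P\subset U_1$, $Q\subset U_2$. For $x\in\nu X$ and $A\subset X$ with $x\notin A'$, a set $C\subset X$ is an asymptotic separator for $x$ and $A$ if $C'$ is a partition between $\{x\}$ and $A'$ in $\nu X$. The transfinite dimension $\operatorname{trasind}$: $\operatorname{trasind} X=-1$ iff $X$ is bounded; for an ordinal $\alpha$, $\operatorname{trasind} X\le\alpha$ iff for every $x\in\nu X$ and $A\subset X$ with $x\notin A'$ there is an asymptotic separator $C$ for $x$ and $A$ with $\operatorname{trasind} C\le\beta$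 for some $\beta<\alpha$; $\operatorname{trasind} X=\alpha$ iff $\operatorname{trasind} X\le\alpha$ but not $\operatorname{trasind}X\le\beta$ for any $\beta<\alpha$; $\operatorname{trasind} X=\infty$ if $\operatorname{trasind} X\le\alpha$ holds for no ordinal $\alpha$. *)

From HB Require Import structures.
From mathcomp Require Import all_boot all_order all_algebra.
From mathcomp Require Import all_classical all_reals all_analysis.
Set Implicit Arguments. Unset Strict Implicit. Unset Printing Implicit Defensive.
Import Order.TTheory GRing.Theory Num.Theory.
Import numFieldNormedType.Exports.
Local Open Scope classical_set_scope.
Local Open Scope ring_scope.

Section Higson.
Variables (R : realType) (T : Type) (d : T -> T -> R) (x0 : T).

Definition is_metric : Prop :=
  [/\ forall x y, 0 <= d x y,
      forall x y, d x y = 0 <-> x = y,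
      forall x y, d x y = d y x &
      forall x y z, d x z <= d x y + d y z].

Definition d_open (U : set T) : Prop :=
  forall x, U x -> exists2 r : R, 0 < r & [set y | d x y < r] `<=` U.

Definition d_compact (K : set T) : Prop :=
  forall F : set (set T), (forall U, F U -> d_open U) -> K `<=` \bigcup_(U in F) U ->
    exists s : seq (set T), (forall U, U \in s -> F U) /\
      K `<=` \bigcup_(U in [set U | U \in s]) U.

Definition proper_metric : Prop :=
  forall (x : T) (r : R), d_compact [set y | d x y <= r].

Definition bounded_set (S : set T) : Prop :=
  exists M : R, forall x y, S x -> S y -> d x y <= M.

Definition diamR (A : set R) : \bar R :=
  ereal_sup [set (`|a - b|)%:E | a in A & b in A].

(* Continuous slowly oscillating maps S -> [0,1], for the subspace S of T with
   the restricted metric (represented by functions T -> R; only values on S matter). *)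
Definition higson_fun (S : set T) (f : T -> R) : Prop :=
  [/\ forall x, S x -> 0 <= f x <= 1,
      forall x, S x -> forall e : R, 0 < e -> exists2 del : R, 0 < del &
        forall y, S y -> d x y < del -> `|f x - f y| < e &
      forall r e : R, 0 < r -> 0 < e -> exists2 D : R, 0 < D &
        forall x, S x -> D <= d x x0 ->
          (diamR (f @` [set y | S y /\ (d x y < r)%R]) < e%:E)%E].

Definition CH (S : set T) := {f : T -> R | higson_fun S f}.

(* the product [0,1]^{C_h(S)} (inside R^{C_h(S)}) with the product topology *)
Definition prodH (S : set T) : topologicalType := [the topologicalType of {ptws CH S -> R}].

Definition hemb (S : set T) (x : T) : prodH S := fun f => proj1_sig f x.
Arguments hemb : clear implicits.

(* Higson compactification cS, Higson corona nu S, and C' for C ⊆ S *)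
Definition hcompact (S : set T) : set (prodH S) := closure (hemb S @` S).
Arguments hcompact : clear implicits.
Definition corona (S : set T) : set (prodH S) := hcompact S `\` (hemb S @` S).
Arguments corona : clear implicits.
Definition trace (S C : set T) : set (prodH S) := closure (hemb S @` C) `&` corona S.
Arguments trace : clear implicits.

(* Z \ Sep = U1 ∪ U2 with U1, U2 disjoint open in Z, P ⊆ U1, Q ⊆ U2;
   relatively open subsets of Z are traces of open subsets of the product *)

Definition partition_in (S : set T) (Z Sep P Q : set (prodH S)) : Prop :=
  exists U1 U2 : set (prodH S),
    [/\ open U1 /\ open U2, U1 `&` U2 `&` Z = set0,
        Z `\` Sep = (U1 `|` U2) `&` Z, P `<=` U1 & Q `<=` U2].

Arguments partition_in : clear implicits.

Definition asymptotic_separator (S : set T) (p : prodH S) (A C : set T) : Prop :=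
  C `<=` S /\ partition_in S (corona S) (trace S C) [set p] (trace S A).

(* trasind, with ordinals represented as elements of a well-ordered type W
   (with strict order lt); "-1" is handled separately as boundedness. *)
Variables (W : Type) (lt : W -> W -> Prop).

Definition well_order : Prop :=
  [/\ well_founded lt,
      forall a b c, lt a b -> lt b c -> lt a c &
      forall a b, lt a b \/ a = b \/ lt b a].

Inductive trasind_le : W -> set T -> Prop :=
| TrasindLe (a : W) (S : set T) :
    (forall (p : prodH S) (A : set T), A `<=` S -> corona S p -> ~ trace S A p ->
       exists C : set T, asymptotic_separator p A C /\
         (bounded_set C \/ exists b : W, lt b a /\ trasind_le b C)) ->
    trasind_le a S.

(* trasind S = a (a an ordinal, so trasind S <> -1, i.e. S unbounded) *)
Definition trasind_eq (a : W) (S : set T) : Prop :=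
  [/\ trasind_le a S, ~ bounded_set S & forall b, lt b a -> ~ trasind_le b S].

End Higson.

From Pilot Require Import Defs.
From HB Require Import structures.
From mathcomp Require Import all_boot all_order all_algebra.
From mathcomp Require Import all_classical all_reals all_analysis.
Import numFieldNormedType.Exports.
Local Open Scope classical_set_scope.

(* Since trasind X = a > b, some point of the corona and some A ⊆ X admit no
   asymptotic separator of dimension < b; but trasind X <= a provides one,
   C, of some dimension m < a, and necessarily m >= b.  If m = b, C is the
   required subset; otherwise b < m < a and we recurse on C, which terminates
   by well-foundedness of the ordinals. *)

Lemma well_founded_minimal {W : Type} {lt : W -> W -> Prop} {P : W -> Prop}
    {c : W} : well_founded lt -> P c ->
  exists2 m, P m & forall c', lt c' m -> ~ P c'.
Proof.
move=> wf_lt; move: c; apply: (well_founded_induction wf_lt) => c IHc Pc.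
have [[c' c'c Pc']|no_smaller] := pselect (exists2 c', lt c' c & P c').
  exact: IHc c' c'c Pc'.
by exists c => // c' c'c Pc'; apply: no_smaller; exists c'.
Qed.

Section IntermediateDimensions.
Variables (R : realType) (T : Type) (d : T -> T -> R) (x0 : T).
Variables (W : Type) (lt : W -> W -> Prop).
Hypothesis lt_wo : well_order lt.

Local Notation trasind_le := (trasind_le d x0 lt).
Local Notation trasind_eq := (trasind_eq d x0 lt).
Local Notation bounded := (Defs.bounded_set d).

Lemma trasind_le_separator {a : W} {S : set T} : trasind_le a S ->
  forall (p : prodH d x0 S) (A : set T), A `<=` S -> corona p -> ~ trace A p ->
  exists C : set T, asymptotic_separator p A C /\
    (bounded C \/ exists c, lt c a /\ trasind_le c C).
Proof. by case. Qed.

Lemma trasind_le_eq {c : W} {C : set T} :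
  ~ bounded C -> trasind_le c C -> exists2 m, trasind_eq m C & ~ lt c m.
Proof.
move=> C_unbounded leC; have [wf_lt _ _] := lt_wo.
have [m leC_m m_min] := well_founded_minimal (P := trasind_le^~ C) wf_lt leC.
by exists m => [|cm]; [split | exact: m_min cm leC].
Qed.

Lemma not_trasind_le {b : W} {S : set T} : ~ trasind_le b S ->
  exists (p : prodH d x0 S) (A : set T),
    [/\ A `<=` S, corona p, ~ trace A p &
        forall C, asymptotic_separator p A C ->
          ~ bounded C /\ forall c, lt c b -> ~ trasind_le c C].
Proof.
move=> not_le; apply: contra_notP not_le => no_witness.
constructor => p A AS corona_p notin_trace.
apply: contra_notP no_witness => no_sep; exists p, A; split=> // C sepC.
split=> [boundedC|c cb leC]; apply: no_sep; exists C; split=> //.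
  by left.
by right; exists c.
Qed.

Lemma trasind_eq_separator {a b : W} {S : set T} :
  trasind_eq a S -> lt b a ->
  exists (m : W) (C : set T), [/\ trasind_eq m C, lt m a & ~ lt m b].
Proof.
case=> leS _ a_min ba; have [_ lt_trans lt_total] := lt_wo.
have [p [A [AS corona_p notin_trace no_small_sep]]] := not_trasind_le (a_min b ba).
have [C [sepC [boundedC|[c [ca leC]]]]] :=
  trasind_le_separator leS p A AS corona_p notin_trace.
  by case: (no_small_sep C sepC).
have [C_unbounded C_large] := no_small_sep C sepC.
have [m eqC_m not_cm] := trasind_le_eq C_unbounded leC.
exists m, C; split; first exact: eqC_m.
  by case: (lt_total m c) => [mc|[mc|cm]]; [exact: lt_trans mc ca | rewrite mc | case: not_cm].
by move=> mb; apply: (C_large m mb); case: eqC_m.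
Qed.

Lemma trasind_eq_intermediate (a : W) (S : set T) : trasind_eq a S ->
  forall b, lt b a -> exists Xb : set T, trasind_eq b Xb.
Proof.
have [wf_lt _ lt_total] := lt_wo.
elim/(well_founded_induction wf_lt): a S => a IHa S eqS b ba.
have [m [C [eqC_m ma not_mb]]] := trasind_eq_separator eqS ba.
case: (lt_total m b) => [//|[<-|bm]]; first by exists C.
exact: IHa m ma C eqC_m b bm.
Qed.

End IntermediateDimensions.

Theorem lemma1 (R : realType) (T : Type) (d : T -> T -> R) (x0 : T)
    (hd : is_metric d) (hp : proper_metric d)
    (W : Type) (lt : W -> W -> Prop) (hW : well_order lt) (a : W) :
  trasind_eq d x0 lt a setT ->
  forall b : W, lt b a -> exists Xb : set T, trasind_eq d x0 lt b Xb.
Proof. exact: trasind_eq_intermediate. Qed.
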